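(* For every positive integer $m$ there is a sentence $\varphi_m\in\mathrm{FO}^2_m[<]$ over the alphabet $\Sigma_m$ that separates $K_m$ and $L_m$.
   Context: Let $\Sigma_m=\{a_0,\dots,a_{m-1}\}$. For positive integers $i,n$ define words: $u_{1,n}=a_0$, $v_{1,n}=\varepsilon$ (empty word); $u_{2,n}=a_0(a_1a_0)^{2n}$, $v_{2,n}=(a_1a_0)^{2n}$; $u_{2i+1,n}=(a_0a_1\cdots a_{2i})^n\,u_{2i,n}$, $v_{2i+1,n}=(a_0a_1\cdots a_{2i})^n\,v_{2i,n}$; $u_{2i+2,n}=u_{2i+1,n}\,(a_{2i+1}a_{2i}\cdots a_0)^n$, $v_{2i+2,n}=v_{2i+1,n}\,(a_{2i+1}a_{2i}\cdots a_0)^n$. Let $K_m=\{u_{m,n}:n\ge1\}$ and $L_m=\{v_{m,n}:n\ge1\}$. Words are finite structures with universe $\{1,\dots,|w|\}$, unary predicates $Q_a$ marking positions carrying $a$, and the order $<$. $\mathrm{FO}^2_n[<]$ is first-order logic over this signature using only the variables $x,y$ with quantifier depth at most $n$; $\mathrm{FO}^2_{m,n}[<]$ is the set of its formulas in which every path in the parse tree has at most $m$ blocks of alternating quantifiers; $\mathrm{FO}^2_m[<]=\bigcup_{n\ge m}\mathrm{FO}^2_{m,n}[<]$. A formula $\varphi$ separates $K,L$ if every word of $K$ satisfies $\varphi$ and no word of $L$ does, or vice versa. *)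

From mathcomp Require Import all_boot.
Set Implicit Arguments. Unset Strict Implicit. Unset Printing Implicit Defensive.

(* Letters a_0,...,a_{m-1} of Sigma_m are represented by the naturals 0..m-1;
   a word is a seq nat (all of whose letters are < m for words over Sigma_m). *)

Fixpoint uw (k n : nat) : seq nat :=
  match k with
  | 0 => [::]
  | 1 => [:: 0]
  | 2 => 0 :: flatten (nseq (2 * n) [:: 1; 0])
  | k'.+1 => if odd k then flatten (nseq n (iota 0 k)) ++ uw k' n
             else uw k' n ++ flatten (nseq n (rev (iota 0 k)))
  end.

Fixpoint vw (k n : nat) : seq nat :=
  match k with
  | 0 => [::]
  | 1 => [::]
  | 2 => flatten (nseq (2 * n) [:: 1; 0])
  | k'.+1 => if odd k then flatten (nseq n (iota 0 k)) ++ vw k' n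
             else vw k' n ++ flatten (nseq n (rev (iota 0 k)))
  end.

Definition inK (m : nat) (w : seq nat) : Prop := exists2 n, 0 < n & w = uw m n.
Definition inL (m : nat) (w : seq nat) : Prop := exists2 n, 0 < n & w = vw m n.

(* ---- FO^2[<] : two variables x (= false) and y (= true) ----
   Formulas are in negation normal form (negation only on atoms), so that the
   quantifier alternation along a path of the parse tree is well defined. *)
Definition var := bool.
Definition vx : var := false.
Definition vy : var := true.

Inductive form : Type :=
| FTrue | FFalse
| FLetter (a : nat) (v : var)
| FNLetter (a : nat) (v : var)
| FLt (v1 v2 : var)
| FNLt (v1 v2 : var)
| FEq (v1 v2 : var)
| FNEq (v1 v2 : var)
| FAnd (f g : form) | FOr (f g : form)
| FEx (v : var) (f : form) | FAll (v : var) (f : form).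

Definition upd (e : var -> nat) (v : var) (i : nat) : var -> nat :=
  fun u => if u == v then i else e u.

(* positions are 1..|w|; the letter at position i is nth _ w (i-1) *)
Definition letter_at (w : seq nat) (i : nat) : nat := nth 0 w i.-1.

Fixpoint sat (w : seq nat) (e : var -> nat) (f : form) : Prop :=
  match f with
  | FTrue => True
  | FFalse => False
  | FLetter a v => letter_at w (e v) = a
  | FNLetter a v => letter_at w (e v) <> a
  | FLt v1 v2 => e v1 < e v2
  | FNLt v1 v2 => ~ (e v1 < e v2)
  | FEq v1 v2 => e v1 = e v2
  | FNEq v1 v2 => e v1 <> e v2
  | FAnd f g => sat w e f /\ sat w e g
  | FOr f g => sat w e f \/ sat w e g
  | FEx v f => exists i, 1 <= i <= size w /\ sat w (upd e v i) f
  | FAll v f => forall i, 1 <= i <= size w -> sat w (upd e v i) f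
  end.

(* free-variable check: [b v] says whether v is bound in the current context *)
Fixpoint closed_in (b : var -> bool) (f : form) : bool :=
  match f with
  | FTrue | FFalse => true
  | FLetter _ v | FNLetter _ v => b v
  | FLt v1 v2 | FNLt v1 v2 | FEq v1 v2 | FNEq v1 v2 => b v1 && b v2
  | FAnd f g | FOr f g => closed_in b f && closed_in b g
  | FEx v f | FAll v f => closed_in (fun u => (u == v) || b u) f
  end.

Definition sentence (f : form) : bool := closed_in (fun _ => false) f.

Fixpoint over_alph (m : nat) (f : form) : bool :=
  match f with
  | FLetter a _ | FNLetter a _ => a < m
  | FAnd f g | FOr f g => over_alph m f && over_alph m g
  | FEx _ f | FAll _ f => over_alph m f
  | _ => true
  end.

(* truth of a sentence in a word (the assignment is irrelevant for sentences) *)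
Definition models (w : seq nat) (f : form) : Prop := sat w (fun _ => 0) f.

Fixpoint qdepth (f : form) : nat :=
  match f with
  | FAnd f g | FOr f g => maxn (qdepth f) (qdepth g)
  | FEx _ f | FAll _ f => (qdepth f).+1
  | _ => 0
  end.

(* maximal number of blocks of alternating quantifiers along a path of the
   parse tree; [cur] is the kind of the last quantifier seen on the path
   (Some true = exists, Some false = forall, None = none yet). *)
Fixpoint blocks_from (cur : option bool) (f : form) : nat :=
  match f with
  | FAnd f g | FOr f g => maxn (blocks_from cur f) (blocks_from cur g)
  | FEx _ f => (if cur == Some true then 0 else 1) + blocks_from (Some true) f
  | FAll _ f => (if cur == Some false then 0 else 1) + blocks_from (Some false) f
  | _ => 0
  end.

Definition blocks (f : form) : nat := blocks_from None f.

Definition in_FO2mn (m n : nat) (f : form) : bool := (qdepth f <= n) && (blocks f <= m).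
Definition in_FO2m (m : nat) (f : form) : Prop := exists2 n, m <= n & in_FO2mn m n f.

Definition separates (f : form) (K L : seq nat -> Prop) : Prop :=
  ((forall w, K w -> models w f) /\ (forall w, L w -> ~ models w f)) \/
  ((forall w, L w -> models w f) /\ (forall w, K w -> ~ models w f)).

(* Write u_{m+1,n} as x u_{m,n} (m+1 odd) or u_{m,n} y (m+1 even), where x ends
   and y begins with the letter a_m, which does not occur in u_{m,n}; likewise
   v_{m+1,n} with the same x and y. So u_{m,n} is the factor after the last
   (resp. before the first) a_m, and relativizing a separator for m to that
   factor, guarding each quantified position by "every a_m lies to my left"
   (resp. "to my right"), yields a separator for m+1. A guard is one quantifier
   over atoms, so relativizing adds at most one alternation block. Starting
   from "some letter is a_0" (m = 1) and "the first letter is a_0" (m = 2), the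
   separator for m has at most m blocks. *)

From mathcomp Require Import all_boot zify.
Set Implicit Arguments. Unset Strict Implicit.

Lemma upd_same e v i : upd e v i v = i.
Proof. by rewrite /upd eqxx. Qed.

Lemma upd_neg e v i : upd e (~~ v) i v = e v.
Proof. by rewrite /upd; case: v. Qed.

Lemma letter_at_catl p s i : 0 < i <= size p -> letter_at (p ++ s) i = letter_at p i.
Proof. by move=> ip; rewrite /letter_at nth_cat ifT //; lia. Qed.

Lemma letter_at_catr p s i : 0 < i -> letter_at (p ++ s) (size p + i) = letter_at s i.
Proof.
by case: i => // i _; rewrite /letter_at addnS /= nth_cat ltnNge leq_addr addKn.
Qed.

Lemma letter_at_mem s i : 0 < i <= size s -> letter_at s i \in s.
Proof. by case: i => // i /andP[_ si]; apply: mem_nth. Qed.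

Section Relativize.

Variables G N : var -> form.

Fixpoint relativize (f : form) : form :=
  match f with
  | FAnd f g => FAnd (relativize f) (relativize g)
  | FOr f g => FOr (relativize f) (relativize g)
  | FEx v f => FEx v (FAnd (G v) (relativize f))
  | FAll v f => FAll v (FOr (N v) (relativize f))
  | a => a
  end.

Lemma closed_in_relativize b f :
  (forall (b : var -> bool) v, b v -> closed_in b (G v)) ->
  (forall (b : var -> bool) v, b v -> closed_in b (N v)) ->
  closed_in b f -> closed_in b (relativize f).
Proof.
move=> cG cN; elim: f b => //= [f IHf g IHg|f IHf g IHg|v f IH|v f IH] b.
- by case/andP=> /IHf -> /IHg ->.
- by case/andP=> /IHf -> /IHg ->.
- by move/IH ->; rewrite cG //= eqxx.
- by move/IH ->; rewrite cN //= eqxx.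
Qed.

Lemma over_alph_relativize m f :
  (forall v, over_alph m (G v)) -> (forall v, over_alph m (N v)) ->
  over_alph m f -> over_alph m (relativize f).
Proof.
move=> aG aN; elim: f => //= [f IHf g IHg|f IHf g IHg|v f IH|v f IH].
- by case/andP=> /IHf -> /IHg ->.
- by case/andP=> /IHf -> /IHg ->.
- by move/IH ->; rewrite aG.
- by move/IH ->; rewrite aN.
Qed.

(* A guard hangs off the quantifier it restricts as a separate branch, so a
   path through it is a path of f ending in at most one extra block. *)
Lemma blocks_from_relativize cur f :
  (forall v, blocks_from (Some true) (G v) <= 1) ->
  (forall v, blocks_from (Some false) (N v) <= 1) ->
  blocks_from cur (relativize f) <= (blocks_from cur f).+1.
Proof.
move=> bG bN; elim: f cur => //= [f IHf g IHg|f IHf g IHg|v f IH|v f IH] cur.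
- by have := IHf cur; have := IHg cur; lia.
- by have := IHf cur; have := IHg cur; lia.
- by have := IH (Some true); have := bG v; case: (cur == Some true) => /=; lia.
- by have := IH (Some false); have := bN v; case: (cur == Some false) => /=; lia.
Qed.

Variables (w t : seq nat) (k : nat).
Hypothesis size_window : k + size t <= size w.
Hypothesis letter_window : forall j, 0 < j <= size t -> letter_at w (j + k) = letter_at t j.
Hypothesis sat_G : forall e v, 0 < e v <= size w -> sat w e (G v) <-> k < e v <= k + size t.
Hypothesis sat_N : forall e v, 0 < e v <= size w -> sat w e (N v) <-> ~ (k < e v <= k + size t).

Definition shifted (b : var -> bool) (e e' : var -> nat) :=
  forall u, b u -> e u = e' u + k /\ 0 < e' u <= size t.

Lemma shifted_upd b e e' v j : shifted b e e' -> 0 < j <= size t ->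
  shifted (fun u => (u == v) || b u) (upd e v (j + k)) (upd e' v j).
Proof. by move=> sh tj u; rewrite /upd; case: (u == v) => //= /sh. Qed.

Lemma window_shift i : k < i <= k + size t -> exists2 j, 0 < j <= size t & i = j + k.
Proof. by exists (i - k); lia. Qed.

Lemma sat_G_upd e v i : 0 < i <= size w ->
  sat w (upd e v i) (G v) <-> k < i <= k + size t.
Proof. by move=> wi; move: (@sat_G (upd e v i) v); rewrite upd_same => /(_ wi). Qed.

Lemma sat_N_upd e v i : 0 < i <= size w ->
  sat w (upd e v i) (N v) <-> ~ (k < i <= k + size t).
Proof. by move=> wi; move: (@sat_N (upd e v i) v); rewrite upd_same => /(_ wi). Qed.

Lemma sat_relativize f b e e' : closed_in b f -> shifted b e e' ->
  sat w e (relativize f) <-> sat t e' f.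
Proof.
elim: f b e e' => //=
  [a v|a v|v1 v2|v1 v2|v1 v2|v1 v2|f IHf g IHg|f IHf g IHg|v f IH|v f IH] b e e'.
- by move=> bv /(_ v bv) [-> /letter_window ->].
- by move=> bv /(_ v bv) [-> /letter_window ->].
- by case/andP=> b1 b2 sh; have [-> _] := sh _ b1; have [-> _] := sh _ b2; lia.
- by case/andP=> b1 b2 sh; have [-> _] := sh _ b1; have [-> _] := sh _ b2; lia.
- by case/andP=> b1 b2 sh; have [-> _] := sh _ b1; have [-> _] := sh _ b2; lia.
- by case/andP=> b1 b2 sh; have [-> _] := sh _ b1; have [-> _] := sh _ b2; lia.
- by case/andP=> c1 c2 sh; rewrite (IHf _ _ _ c1 sh) (IHg _ _ _ c2 sh).
- by case/andP=> c1 c2 sh; rewrite (IHf _ _ _ c1 sh) (IHg _ _ _ c2 sh).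
- move=> cf sh; split.
  + case=> i [wi [/(sat_G_upd _ _ wi)/window_shift[j tj ->] fi]].
    by exists j; split=> //; apply/(IH _ _ _ cf (shifted_upd (v := v) sh tj)).
  + case=> j [tj fj]; have wj : 0 < j + k <= size w by lia.
    exists (j + k); split=> //; split; first by apply/(sat_G_upd _ _ wj); lia.
    by apply/(IH _ _ _ cf (shifted_upd (v := v) sh tj)).
- move=> cf sh; split.
  + move=> fall j tj; have wj : 0 < j + k <= size w by lia.
    case: (fall _ wj) => [/(sat_N_upd _ _ wj)|]; first lia.
    by move/(IH _ _ _ cf (shifted_upd (v := v) sh tj)).
  + move=> fall i wi; case: (boolP (k < i <= k + size t)) => [/window_shift[j tj ->]|out].
    * by right; apply/(IH _ _ _ cf (shifted_upd (v := v) sh tj)); apply: fall.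
    * by left; apply/(sat_N_upd _ _ wi); apply/negP.
Qed.

Lemma models_relativize f : sentence f -> models w (relativize f) <-> models t f.
Proof. by move=> sf; apply: (sat_relativize sf). Qed.

End Relativize.

Definition after_last c v := FAll (~~ v) (FOr (FLt (~~ v) v) (FNLetter c (~~ v))).
Definition not_after_last c v := FEx (~~ v) (FAnd (FNLt (~~ v) v) (FLetter c (~~ v))).
Definition before_first c v := FAll (~~ v) (FOr (FLt v (~~ v)) (FNLetter c (~~ v))).
Definition not_before_first c v := FEx (~~ v) (FAnd (FNLt v (~~ v)) (FLetter c (~~ v))).

Lemma letter_at_cat_cons (q t : seq nat) c : letter_at (q ++ c :: t) (size q + 1) = c.
Proof. by rewrite letter_at_catr. Qed.

Lemma last_occurrence (q t : seq nat) c i : c \notin t -> i <= size (q ++ c :: t) ->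
  letter_at (q ++ c :: t) i = c -> i <= size q + 1.
Proof.
move=> ct iw ci; rewrite leqNgt; apply/negP => qi; move/negP: ct; apply.
rewrite -ci (_ : i = size (rcons q c) + (i - size q - 1)); last by rewrite size_rcons; lia.
rewrite -cat_rcons letter_at_catr ?letter_at_mem //; move: iw; rewrite size_cat /=; lia.
Qed.

Lemma first_occurrence (t r : seq nat) c i : c \notin t -> 0 < i ->
  letter_at (t ++ c :: r) i = c -> size t < i.
Proof.
move=> ct i0 ci; rewrite ltnNge; apply/negP => it; move/negP: ct; apply.
have ti : 0 < i <= size t by lia.
by rewrite -ci letter_at_catl // letter_at_mem.
Qed.

Lemma sat_after_last (q t : seq nat) c e v : c \notin t ->
  sat (q ++ c :: t) e (after_last c v) <-> size q + 1 < e v.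
Proof.
move=> ct; split=> [|qv i /andP[_ iw]].
- have wq : 0 < size q + 1 <= size (q ++ c :: t) by rewrite size_cat /=; lia.
  by move/(_ _ wq); rewrite upd_same upd_neg letter_at_cat_cons; case.
- rewrite upd_same upd_neg; case: (ltnP i (e v)) => [|vi]; [by left|right => ci].
  by have := last_occurrence ct iw ci; lia.
Qed.

Lemma sat_not_after_last (q t : seq nat) c e v : c \notin t ->
  sat (q ++ c :: t) e (not_after_last c v) <-> e v <= size q + 1.
Proof.
move=> ct; split=> [[i [/andP[_ iw] []]]|vq].
- by rewrite upd_same upd_neg => iv /(last_occurrence ct iw); lia.
- exists (size q + 1); split; first by rewrite size_cat /=; lia.
  by rewrite /= upd_same upd_neg letter_at_cat_cons; split=> //; lia.
Qed.

Lemma sat_before_first (t r : seq nat) c e v : c \notin t ->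
  sat (t ++ c :: r) e (before_first c v) <-> e v <= size t.
Proof.
move=> ct; split=> [|vt i /andP[i0 _]].
- have wt : 0 < size t + 1 <= size (t ++ c :: r) by rewrite size_cat /=; lia.
  by move/(_ _ wt); rewrite upd_same upd_neg letter_at_cat_cons; case=> //; lia.
- rewrite upd_same upd_neg; case: (ltnP (e v) i) => [|iv]; [by left|right => ci].
  by have := first_occurrence ct i0 ci; lia.
Qed.

Lemma sat_not_before_first (t r : seq nat) c e v : c \notin t ->
  sat (t ++ c :: r) e (not_before_first c v) <-> size t < e v.
Proof.
move=> ct; split=> [[i [/andP[i0 _] []]]|tv].
- by rewrite upd_same upd_neg => vi /(first_occurrence ct i0); lia.
- exists (size t + 1); split; first by rewrite size_cat /=; lia.
  by rewrite /= upd_same upd_neg letter_at_cat_cons; split=> //; lia.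
Qed.

Lemma models_relativize_after_last (q t : seq nat) c f : c \notin t -> sentence f ->
  models (q ++ c :: t) (relativize (after_last c) (not_after_last c) f) <-> models t f.
Proof.
move=> ct; apply: (models_relativize (k := size q + 1)).
- by rewrite size_cat /=; lia.
- move=> j tj; have -> : j + (size q + 1) = size (rcons q c) + j by rewrite size_rcons; lia.
  by rewrite -cat_rcons letter_at_catr //; lia.
- by move=> e v; rewrite size_cat sat_after_last //=; lia.
- by move=> e v; rewrite size_cat sat_not_after_last //=; lia.
Qed.

Lemma models_relativize_before_first (t r : seq nat) c f : c \notin t -> sentence f ->
  models (t ++ c :: r) (relativize (before_first c) (not_before_first c) f) <-> models t f.
Proof.
move=> ct; apply: (models_relativize (k := 0)).
- by rewrite size_cat /=; lia.
- by move=> j tj; rewrite addn0 letter_at_catl.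
- by move=> e v; rewrite sat_before_first //=; lia.
- by move=> e v; rewrite sat_not_before_first //=; lia.
Qed.

Definition extend_word (m n : nat) (w : seq nat) : seq nat :=
  if odd m.+1 then flatten (nseq n (iota 0 m.+1)) ++ w
  else w ++ flatten (nseq n (rev (iota 0 m.+1))).

Lemma uw_extend m n : uw m.+3 n = extend_word m.+2 n (uw m.+2 n).
Proof. by []. Qed.

Lemma vw_extend m n : vw m.+3 n = extend_word m.+2 n (vw m.+2 n).
Proof. by []. Qed.

Lemma flatten_nseq_iota n m : 0 < n -> exists q, flatten (nseq n (iota 0 m.+1)) = q ++ [:: m].
Proof.
case: n => // n _; rewrite -(addn1 m) iotaD -(addn1 n) nseqD flatten_cat /= cats0 catA.
by eexists.
Qed.

Lemma flatten_nseq_rev_iota n m : 0 < n -> exists r, flatten (nseq n (rev (iota 0 m.+1))) = m :: r.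
Proof. by case: n => // n _; rewrite -(addn1 m) iotaD rev_cat /=; eexists. Qed.

Lemma all_flatten_nseq T (P : pred T) n s : all P s -> all P (flatten (nseq n s)).
Proof. by move=> Ps; elim: n => //= n IH; rewrite all_cat Ps IH. Qed.

Lemma extend_word_letters m n w : all (gtn m) w -> all (gtn m.+1) (extend_word m n w).
Proof.
move=> wm; have wm1 : all (gtn m.+1) w by apply: sub_all wm => x /ltnW.
have im : all (gtn m.+1) (iota 0 m.+1) by apply/allP => x; rewrite mem_iota.
by rewrite /extend_word; case: odd; rewrite all_cat wm1 all_flatten_nseq ?all_rev.
Qed.

Lemma uw_vw_letters m n : 0 < m -> all (gtn m) (uw m n) && all (gtn m) (vw m n).
Proof.
case: m => // m _; elim: m => [|[|m] IH] //; first by rewrite /= all_flatten_nseq.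
by rewrite uw_extend vw_extend !extend_word_letters //; case/andP: IH.
Qed.

Lemma over_alph_leq m m' f : m <= m' -> over_alph m f -> over_alph m' f.
Proof.
move=> mm'; elim: f => //= [a v /leq_trans->|a v /leq_trans->|f IHf g IHg|f IHf g IHg] //.
- by case/andP=> /IHf -> /IHg.
- by case/andP=> /IHf -> /IHg.
Qed.

Definition sep_step (m : nat) (f : form) : form :=
  if odd m.+1 then relativize (after_last m) (not_after_last m) f
  else relativize (before_first m) (not_before_first m) f.

Lemma sentence_sep_step m f : sentence f -> sentence (sep_step m f).
Proof.
by rewrite /sep_step; case: odd; apply: closed_in_relativize => b [] /= ->; rewrite ?orbT.
Qed.

Lemma over_alph_sep_step m f : over_alph m f -> over_alph m.+1 (sep_step m f).
Proof.
move/(over_alph_leq (leqnSn m)) => fm.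
by rewrite /sep_step; case: odd; apply: over_alph_relativize => // v /=; rewrite ltnSn.
Qed.

Lemma blocks_sep_step m f : blocks (sep_step m f) <= (blocks f).+1.
Proof. by rewrite /sep_step; case: odd; apply: blocks_from_relativize. Qed.

Lemma models_sep_step m n w f : 0 < n -> all (gtn m) w -> sentence f ->
  models (extend_word m n w) (sep_step m f) <-> models w f.
Proof.
move=> n0 wm; have mw : m \notin w by apply/negP => /(allP wm); rewrite /= ltnn.
rewrite /extend_word /sep_step; case: odd.
- by have [q ->] := flatten_nseq_iota m n0; rewrite -catA; apply: models_relativize_after_last.
- by have [r ->] := flatten_nseq_rev_iota m n0; apply: models_relativize_before_first.
Qed.

Fixpoint separator (m : nat) : form :=
  match m with
  | 0 => FTrue
  | 1 => FEx vx (FLetter 0 vx)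
  | 2 => FEx vx (FAnd (FLetter 0 vx) (FAll vy (FNLt vy vx)))
  | m'.+1 => sep_step m' (separator m')
  end.

Lemma separator_spec m : 0 < m ->
  [/\ sentence (separator m), over_alph m (separator m), blocks (separator m) <= m &
      forall n, 0 < n -> models (uw m n) (separator m) /\ ~ models (vw m n) (separator m)].
Proof.
case: m => // m _; elim: m => [|[|m] IH].
- split=> // n _; split; first by exists 1.
  by case=> i [/= i0]; lia.
- split=> // [[|n]] // _; split.
    by exists 1; split=> //; split=> // j; rewrite /upd /=; lia.
  case=> i [/= i1 [ai /(_ 1 isT) ile]]; rewrite upd_same in ai.
  have ei : i = 1 by move: ile; rewrite /upd /=; lia.
  by rewrite ei in ai.
- case: IH => sf af bf sep; split.
  + exact: sentence_sep_step.
  + exact: over_alph_sep_step.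
  + by apply: leq_trans (blocks_sep_step _ _) _.
  + move=> n n0; have /andP[um vm] := uw_vw_letters n (isT : 0 < m.+2).
    by rewrite uw_extend vw_extend !models_sep_step //; apply: sep.
Qed.

Theorem lemma4p9 (m : nat) (hm : 0 < m) :
  exists phi : form,
    [/\ sentence phi, over_alph m phi, in_FO2m m phi & separates phi (inK m) (inL m)].
Proof.
have [sf af bf sep] := separator_spec hm.
exists (separator m); split=> //.
- exists (maxn m (qdepth (separator m))); first exact: leq_maxl.
  by rewrite /in_FO2mn leq_maxr bf.
- by left; split=> w [n n0 ->]; case: (sep n n0).
Qed.
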